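(* Let $A_1,B_1,A_2,B_2$ be groups with $A_1\cap B_1=A_2\cap B_2=\{1\}$. If $\mathcal{F}(A_1)\equiv\mathcal{F}(A_2)$ and $\mathcal{F}(B_1)\equiv\mathcal{F}(B_2)$ (with respect to the language of groups), then the free products $A_1*B_1$ and $A_2*B_2$ are existentially equivalent in the language of groups.
   Context: The language of groups has a constant $1$, a binary function $\cdot$ and a unary function $^{-1}$. For structures $\mathcal{M},\mathcal{N}$ in a language $\mathcal{L}$, an $\mathcal{L}$-isomorphism between subsets $S\subseteq M$, $T\subseteq N$ is a bijection $\phi:S\to T$ such that $\phi$ and $\phi^{-1}$ preserve constants lying in the set, preserve relations on tuples from the set, and satisfy $\phi(f(s_1,\dots,s_n))=f(\phi(s_1),\dots,\phi(s_n))$ whenever $s_i\in S$ and $f(s_1,\dots,s_n)\in S$ (and symmetrically for $\phi^{-1}$). $\mathcal{F}(\mathcal{M})\equiv\mathcal{F}(\mathcal{N})$ means that there is a bijection $\theta$ between the sets of $\mathcal{L}$-isomorphism classes of finite subsets of $M$ and of $N$ with $S\cong_\mathcal{L}T$ whenever $\theta([S])=[T]$; equivalently every finite subset of either structure is $\mathcal{L}$-isomorphic to a finite subset of the other. Existential equivalence means satisfying the same existential sentences. *)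

From Stdlib Require Import List Arith.
Import ListNotations.

Record Group := {
  carrier :> Type;
  gmul : carrier -> carrier -> carrier;
  ginv : carrier -> carrier;
  gone : carrier;
  gmul_assoc : forall x y z, gmul x (gmul y z) = gmul (gmul x y) z;
  gmul_1l : forall x, gmul gone x = x;
  gmul_1r : forall x, gmul x gone = x;
  gmul_Vl : forall x, gmul (ginv x) x = gone;
  gmul_Vr : forall x, gmul x (ginv x) = gone
}.

Arguments gmul {g} _ _.
Arguments ginv {g} _.
Arguments gone {g}.

Definition is_hom (G H : Group) (f : G -> H) : Prop :=
  forall x y : G, f (gmul x y) = gmul (f x) (f y).

Definition IsFreeProduct (A B P : Group) (iA : A -> P) (iB : B -> P) : Prop :=
  is_hom A P iA /\ is_hom B P iB /\
  forall (H : Group) (f : A -> H) (g : B -> H),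
    is_hom A H f -> is_hom B H g ->
    exists h : P -> H,
      (is_hom P H h /\ (forall a, h (iA a) = f a) /\ (forall b, h (iB b) = g b)) /\
      (forall h' : P -> H,
          is_hom P H h' -> (forall a, h' (iA a) = f a) -> (forall b, h' (iB b) = g b) ->
          forall x, h' x = h x).

(** A finite subset S of M is given by a list
    [s] enumerating it (repetitions allowed); the map s_i |-> t_i is an
    L-isomorphism S -> T iff it is well defined and bijective, and it and its
    inverse preserve the constant 1, and the graphs of · and ^-1 restricted to
    the sets. *)
Definition PartIso (M N : Group) (s : list M) (t : list N) : Prop :=
  length s = length t /\
  forall i j k, i < length s -> j < length s -> k < length s ->
    (nth_error s i = nth_error s j <-> nth_error t i = nth_error t j) /\
    (nth_error s i = Some gone <-> nth_error t i = Some gone) /\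
    (option_map ginv (nth_error s i) = nth_error s j <->
       option_map ginv (nth_error t i) = nth_error t j) /\
    ((match nth_error s i, nth_error s j with
      | Some x, Some y => Some (gmul x y) | _, _ => None end) = nth_error s k <->
     (match nth_error t i, nth_error t j with
      | Some x, Some y => Some (gmul x y) | _, _ => None end) = nth_error t k).

Definition FinEmbeds (M N : Group) : Prop :=
  forall s : list M, exists t : list N, PartIso M N s t.

Definition FEquiv (M N : Group) : Prop := FinEmbeds M N /\ FinEmbeds N M.

Inductive term : Type :=
| TVar : nat -> term
| TOne : term
| TMul : term -> term -> term
| TInv : term -> term.

Inductive qf : Type :=
| QEq : term -> term -> qf
| QNot : qf -> qf
| QAnd : qf -> qf -> qf
| QOr : qf -> qf -> qf.

Fixpoint eval_term (G : Group) (e : nat -> G) (t : term) : G :=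
  match t with
  | TVar n => e n
  | TOne => gone
  | TMul a b => gmul (eval_term G e a) (eval_term G e b)
  | TInv a => ginv (eval_term G e a)
  end.

Fixpoint sat_qf (G : Group) (e : nat -> G) (f : qf) : Prop :=
  match f with
  | QEq a b => eval_term G e a = eval_term G e b
  | QNot g => ~ sat_qf G e g
  | QAnd g h => sat_qf G e g /\ sat_qf G e h
  | QOr g h => sat_qf G e g \/ sat_qf G e h
  end.

(** The existential sentence ∃x̄ φ (all variables of φ existentially closed)
    holds in G. *)
Definition sat_ex (G : Group) (f : qf) : Prop := exists e : nat -> G, sat_qf G e f.

Definition ExEquiv (M N : Group) : Prop := forall f : qf, sat_ex M f <-> sat_ex N f.

(** By
    symmetry it suffices to transfer a true existential sentence from [P1] to
    [P2].  The proof rests on the normal form theorem for free products: every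
    element is the value of a word over [A + B], and two words have the same
    value iff they have the same reduced form, reduction being the left action
    of letters on reduced words (van der Waerden).  Reducing a word only
    involves finitely many letters; a partial isomorphism of these letters
    (and their inverses) into [A2] and [B2] commutes with every reduction step.
    So writing a witness in [P1] with words and mapping their letters gives a
    witness in [P2] satisfying the same atomic formulas. *)

From Stdlib Require Import List ClassicalEpsilon FunctionalExtensionality ProofIrrelevance.
Import ListNotations.

Lemma mul_cancel_l (G : Group) (a x y : G) : gmul a x = gmul a y -> x = y.
Proof.
  intro H. rewrite <- (gmul_1l G x), <- (gmul_1l G y), <- (gmul_Vl G a).
  rewrite <- !gmul_assoc, H. reflexivity.
Qed.

Lemma inv_unique (G : Group) (x y : G) : gmul x y = gone -> y = ginv x.
Proof. intro H. apply (mul_cancel_l G x). rewrite H, gmul_Vr. reflexivity. Qed.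

Lemma inv_inv (G : Group) (x : G) : ginv (ginv x) = x.
Proof. symmetry. apply inv_unique, gmul_Vl. Qed.

Lemma inv_mul (G : Group) (x y : G) : ginv (gmul x y) = gmul (ginv y) (ginv x).
Proof.
  symmetry. apply inv_unique.
  rewrite <- gmul_assoc, (gmul_assoc G y), gmul_Vr, gmul_1l, gmul_Vr. reflexivity.
Qed.

Lemma inv_one (G : Group) : ginv (@gone G) = gone.
Proof. symmetry. apply inv_unique, gmul_1l. Qed.

Lemma hom_one (G H : Group) (f : G -> H) : is_hom G H f -> f gone = gone.
Proof.
  intro Hf. apply (mul_cancel_l H (f gone)). rewrite <- Hf, !gmul_1r. reflexivity.
Qed.

Lemma hom_inv (G H : Group) (f : G -> H) : is_hom G H f -> forall x, f (ginv x) = ginv (f x).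
Proof. intros Hf x. apply inv_unique. rewrite <- Hf, gmul_Vr. exact (hom_one G H f Hf). Qed.

Lemma sig_ext {X : Type} {P : X -> Prop} (x y : {z | P z}) :
  proj1_sig x = proj1_sig y -> x = y.
Proof. destruct x, y; simpl; intro; subst. f_equal. apply proof_irrelevance. Qed.

(** The symmetric group of an arbitrary type: the target of the action that
    proves the normal form theorem. *)

Record Perm (X : Type) := {
  perm_fun : X -> X;
  perm_inv : X -> X;
  perm_funK : forall x, perm_fun (perm_inv x) = x;
  perm_invK : forall x, perm_inv (perm_fun x) = x }.
Arguments perm_fun {X} _ _.
Arguments perm_inv {X} _ _.
Arguments perm_funK {X} _ _.
Arguments perm_invK {X} _ _.

Lemma perm_ext {X} (p q : Perm X) : (forall x, perm_fun p x = perm_fun q x) -> p = q.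
Proof.
  intro H.
  assert (Hinv : forall x, perm_inv p x = perm_inv q x).
  { intro x. rewrite <- (perm_funK q x) at 1. rewrite <- H, perm_invK. reflexivity. }
  destruct p as [f1 g1 a1 b1], q as [f2 g2 a2 b2]; simpl in *.
  apply functional_extensionality in H. apply functional_extensionality in Hinv. subst.
  f_equal; apply proof_irrelevance.
Qed.

Definition perm_comp {X} (p q : Perm X) : Perm X.
Proof.
  refine {| perm_fun := fun x => perm_fun p (perm_fun q x);
            perm_inv := fun x => perm_inv q (perm_inv p x) |}.
  - intro x. rewrite !perm_funK. reflexivity.
  - intro x. rewrite !perm_invK. reflexivity.
Defined.

Definition perm_id (X : Type) : Perm X :=
  {| perm_fun := fun x => x; perm_inv := fun x => x;
     perm_funK := fun x => eq_refl; perm_invK := fun x => eq_refl |}.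

Definition perm_rev {X} (p : Perm X) : Perm X :=
  {| perm_fun := perm_inv p; perm_inv := perm_fun p;
     perm_funK := perm_invK p; perm_invK := perm_funK p |}.

Definition Sym (X : Type) : Group.
Proof.
  refine {| carrier := Perm X; gmul := perm_comp; ginv := perm_rev; gone := perm_id X |};
  intros; apply perm_ext; intros; simpl; auto using perm_funK, perm_invK.
Defined.

Section Words.
Variables A B : Group.

Definition letter := (A + B)%type.

Definition is_one (l : letter) : Prop :=
  match l with inl a => a = gone | inr b => b = gone end.

Definition ucons (l : letter) (w : list letter) : list letter :=
  if excluded_middle_informative (is_one l) then w else l :: w.

Definition act (l : letter) (w : list letter) : list letter :=
  match l, w with
  | inl a, inl a' :: w' => ucons (inl (gmul a a')) w'
  | inr b, inr b' :: w' => ucons (inr (gmul b b')) w'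
  | _, _ => ucons l w
  end.

Definition red (u : list letter) : list letter := fold_right act [] u.

Definition fits (l : letter) (w : list letter) : Prop :=
  match l, w with
  | inl _, inl _ :: _ | inr _, inr _ :: _ => False
  | _, _ => True
  end.

Fixpoint reduced (w : list letter) : Prop :=
  match w with
  | [] => True
  | l :: w' => ~ is_one l /\ reduced w' /\ fits l w'
  end.

Ltac case_ucons :=
  unfold ucons; repeat match goal with |- context [excluded_middle_informative ?P] =>
    destruct (excluded_middle_informative P) end; simpl in *.

Lemma act_reduced l w : reduced w -> reduced (act l w).
Proof.
  destruct l as [a|b], w as [|[a'|b'] w']; simpl; intros; case_ucons; tauto.
Qed.

Lemma act_one_A w : reduced w -> act (inl gone) w = w.
Proof.
  destruct w as [|[a'|b'] w']; simpl; intros; case_ucons;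
    rewrite ?gmul_1l in *; intuition congruence.
Qed.

Lemma act_one_B w : reduced w -> act (inr gone) w = w.
Proof.
  destruct w as [|[a'|b'] w']; simpl; intros; case_ucons;
    rewrite ?gmul_1l in *; intuition congruence.
Qed.

Lemma act_mul_A a b w : reduced w -> act (inl (gmul a b)) w = act (inl a) (act (inl b) w).
Proof.
  destruct w as [|[a'|b'] w']; simpl; intros Hr.
  - case_ucons; subst; rewrite ?gmul_1r, ?gmul_1l in *; case_ucons; congruence.
  - destruct Hr as (_ & Hw' & Hfit). rewrite <- gmul_assoc. unfold ucons at 2.
    destruct (excluded_middle_informative (is_one (inl (gmul b a')))) as [E|NE]; simpl in *.
    + rewrite E, gmul_1r.
      destruct w' as [|[x|y] w'']; simpl in *; try tauto; case_ucons; intuition congruence.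
    + reflexivity.
  - case_ucons; subst; rewrite ?gmul_1r in *; case_ucons; congruence.
Qed.

Lemma act_mul_B a b w : reduced w -> act (inr (gmul a b)) w = act (inr a) (act (inr b) w).
Proof.
  destruct w as [|[a'|b'] w']; simpl; intros Hr.
  - case_ucons; subst; rewrite ?gmul_1r, ?gmul_1l in *; case_ucons; congruence.
  - case_ucons; subst; rewrite ?gmul_1r in *; case_ucons; congruence.
  - destruct Hr as (_ & Hw' & Hfit). rewrite <- gmul_assoc. unfold ucons at 2.
    destruct (excluded_middle_informative (is_one (inr (gmul b b')))) as [E|NE]; simpl in *.
    + rewrite E, gmul_1r.
      destruct w' as [|[x|y] w'']; simpl in *; try tauto; case_ucons; intuition congruence.
    + reflexivity.
Qed.

(* The letters of [u] and all the reduced words computed while reducing [u]: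
   the finite set of letters a reduction of [u] depends on. *)
Fixpoint trace (u : list letter) : list letter :=
  match u with [] => [] | l :: u' => l :: red (l :: u') ++ trace u' end.

End Words.

Section Evaluation.
Variables A B P : Group.
Variable iA : A -> P.
Variable iB : B -> P.

Definition eval_letter (l : letter A B) : P :=
  match l with inl a => iA a | inr b => iB b end.

Definition eval_word (w : list (letter A B)) : P :=
  fold_right (fun l acc => gmul (eval_letter l) acc) gone w.

Definition inv_letter (l : letter A B) : letter A B :=
  match l with inl a => inl (ginv a) | inr b => inr (ginv b) end.

Definition inv_word (w : list (letter A B)) : list (letter A B) :=
  rev (map inv_letter w).

Lemma eval_word_app u v : eval_word (u ++ v) = gmul (eval_word u) (eval_word v).
Proof.
  induction u as [|l u IH]; simpl.
  - rewrite gmul_1l. reflexivity.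
  - rewrite IH, gmul_assoc. reflexivity.
Qed.

Hypothesis HiA : is_hom A P iA.
Hypothesis HiB : is_hom B P iB.

Lemma eval_inv_word u : eval_word (inv_word u) = ginv (eval_word u).
Proof.
  induction u as [|l u IH]; unfold inv_word in *; simpl.
  - rewrite inv_one. reflexivity.
  - rewrite eval_word_app, IH, inv_mul. simpl. rewrite gmul_1r. f_equal.
    destruct l; simpl; apply hom_inv; assumption.
Qed.

Lemma eval_act l w : eval_word (act A B l w) = gmul (eval_letter l) (eval_word w).
Proof.
  assert (Hucons : forall l w, eval_word (ucons A B l w) = gmul (eval_letter l) (eval_word w)).
  { intros [a|b] w'; unfold ucons; destruct excluded_middle_informative as [E|_];
      simpl in *; try subst; rewrite ?(hom_one _ _ _ HiA), ?(hom_one _ _ _ HiB), ?gmul_1l;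
      reflexivity. }
  destruct l as [a|b], w as [|[a'|b'] w']; simpl; rewrite Hucons; simpl;
    rewrite ?HiA, ?HiB, ?gmul_assoc; reflexivity.
Qed.

Lemma eval_red u : eval_word (red A B u) = eval_word u.
Proof.
  induction u as [|l u IH]; [reflexivity|].
  change (eval_word (act A B l (red A B u)) = eval_word (l :: u)).
  rewrite eval_act, IH. reflexivity.
Qed.

End Evaluation.

(** In a free product [P] of [A] and [B] every element is the value of a
    word, and two words have the same value iff they have the same reduced
    form.  The latter is van der Waerden's argument: [A] and [B] act on the
    set of reduced words, so the universal property yields an action of [P]
    sending the empty word to the reduced form of any word for an element. *)

Section FreeProduct.
Variables A B P : Group.
Variable iA : A -> P.
Variable iB : B -> P.
Hypothesis HP : IsFreeProduct A B P iA iB.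

Let HiA : is_hom A P iA := proj1 HP.
Let HiB : is_hom B P iB := proj1 (proj2 HP).

Definition RW := {w : list (letter A B) | reduced A B w}.

Definition act_RW (l : letter A B) (w : RW) : RW :=
  exist _ (act A B l (proj1_sig w)) (act_reduced A B l _ (proj2_sig w)).

Definition perm_A (a : A) : Sym RW.
Proof.
  refine {| perm_fun := act_RW (inl a); perm_inv := act_RW (inl (ginv a)) |};
    intro w; apply sig_ext; cbn [act_RW proj1_sig];
    rewrite <- act_mul_A, ?gmul_Vr, ?gmul_Vl, act_one_A; try reflexivity;
    apply proj2_sig.
Defined.

Definition perm_B (b : B) : Sym RW.
Proof.
  refine {| perm_fun := act_RW (inr b); perm_inv := act_RW (inr (ginv b)) |};
    intro w; apply sig_ext; cbn [act_RW proj1_sig];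
    rewrite <- act_mul_B, ?gmul_Vr, ?gmul_Vl, act_one_B; try reflexivity;
    apply proj2_sig.
Defined.

Lemma perm_A_hom : is_hom A (Sym RW) perm_A.
Proof. intros x y. apply perm_ext. intro w. apply sig_ext. apply act_mul_A, proj2_sig. Qed.

Lemma perm_B_hom : is_hom B (Sym RW) perm_B.
Proof. intros x y. apply perm_ext. intro w. apply sig_ext. apply act_mul_B, proj2_sig. Qed.

Theorem eval_word_eq_iff u v :
  eval_word A B P iA iB u = eval_word A B P iA iB v <-> red A B u = red A B v.
Proof.
  split.
  - pose proof (proj2 (proj2 HP)) as Huniv.
    destruct (Huniv (Sym RW) perm_A perm_B perm_A_hom perm_B_hom) as [h [[Hh [HhA HhB]] _]].
    assert (Hact : forall x w, proj1_sig (perm_fun (h (eval_word A B P iA iB x)) w)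
                               = fold_right (act A B) (proj1_sig w) x).
    { induction x as [|l x IH]; intro w; simpl.
      - rewrite (hom_one _ _ _ Hh). reflexivity.
      - rewrite Hh. destruct l; simpl; [rewrite HhA | rewrite HhB]; simpl; rewrite IH; reflexivity. }
    intro E. transitivity (proj1_sig (perm_fun (h (eval_word A B P iA iB u)) (exist _ [] I))).
    + symmetry. apply Hact.
    + rewrite E. apply Hact.
  - intro E. rewrite <- (eval_red _ _ _ _ _ HiA HiB u), <- (eval_red _ _ _ _ _ HiA HiB v), E.
    reflexivity.
Qed.

Definition word_values : Group.
Proof.
  refine {| carrier := {x : P | exists u, eval_word A B P iA iB u = x};
            gmul := fun x y => exist _ (gmul (proj1_sig x) (proj1_sig y)) _;
            ginv := fun x => exist _ (ginv (proj1_sig x)) _;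
            gone := exist _ gone (ex_intro _ [] eq_refl) |}.
  Unshelve.
  all: try (intros; apply sig_ext; simpl).
  - apply gmul_assoc.
  - apply gmul_1l.
  - apply gmul_1r.
  - apply gmul_Vl.
  - apply gmul_Vr.
  - destruct x as [x [u Hu]], y as [y [v Hv]]. exists (u ++ v).
    rewrite eval_word_app; simpl; congruence.
  - destruct x as [x [u Hu]]. exists (inv_word A B u).
    rewrite eval_inv_word by assumption; simpl; congruence.
Defined.

(* Generation: the free product is generated by the images of its factors,
   since the inclusion of [word_values] is a section of [P]. *)
Lemma eval_word_surj (x : P) : exists u, eval_word A B P iA iB u = x.
Proof.
  pose proof (proj2 (proj2 HP)) as Huniv.
  pose (jA := fun a => exist _ (iA a) (ex_intro _ [inl a] (gmul_1r P (iA a))) : word_values).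
  pose (jB := fun b => exist _ (iB b) (ex_intro _ [inr b] (gmul_1r P (iB b))) : word_values).
  assert (HjA : is_hom A word_values jA) by (intros a a'; apply sig_ext, HiA).
  assert (HjB : is_hom B word_values jB) by (intros b b'; apply sig_ext, HiB).
  destruct (Huniv word_values jA jB HjA HjB) as [h [[Hh [HhA HhB]] _]].
  destruct (Huniv P iA iB HiA HiB) as [h0 [_ Hunique]].
  assert (Hid : forall y, y = h0 y) by (apply Hunique; auto; intros ? ?; reflexivity).
  assert (Hsec : forall y, proj1_sig (h y) = h0 y).
  { apply Hunique.
    - intros y y'. rewrite Hh. reflexivity.
    - intro a. rewrite HhA. reflexivity.
    - intro b. rewrite HhB. reflexivity. }
  rewrite (Hid x), <- Hsec. exact (proj2_sig (h x)).
Qed.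

End FreeProduct.

Section PartialHom.
Variables M N : Group.

Definition PartHom (S : M -> Prop) (f : M -> N) : Prop :=
  S gone /\ f gone = gone /\
  (forall x y, S x -> S y -> f x = f y -> x = y) /\
  (forall x y, S x -> S y -> S (gmul x y) -> f (gmul x y) = gmul (f x) (f y)).

Lemma parthom_one_iff S f : PartHom S f -> forall x, S x -> (f x = gone <-> x = gone).
Proof.
  intros (S1 & f1 & Hinj & _) x Sx. split; intro E.
  - apply Hinj; congruence.
  - subst. exact f1.
Qed.

Lemma parthom_inv S f : PartHom S f -> forall x, S x -> S (ginv x) -> f (ginv x) = ginv (f x).
Proof.
  intros (S1 & f1 & _ & Hmul) x Sx Sx'. apply inv_unique.
  rewrite <- Hmul, gmul_Vr; [exact f1 | assumption | assumption | rewrite gmul_Vr; exact S1].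
Qed.

Definition partiso_map (s : list M) (t : list N) (x : M) : N :=
  epsilon (inhabits gone) (fun y => exists i, nth_error s i = Some x /\ nth_error t i = Some y).

Lemma partiso_map_spec s t x : length s = length t -> In x s ->
  exists i, nth_error s i = Some x /\ nth_error t i = Some (partiso_map s t x).
Proof.
  intros Hlen Hx. unfold partiso_map. apply epsilon_spec.
  destruct (In_nth_error _ _ Hx) as [i Hi].
  destruct (nth_error t i) as [y|] eqn:Ht.
  - exists y, i. auto.
  - apply nth_error_None in Ht. rewrite <- Hlen in Ht.
    apply nth_error_None in Ht. congruence.
Qed.

Lemma nth_error_lt {X} (l : list X) i x : nth_error l i = Some x -> i < length l.
Proof. intro H. apply nth_error_Some. congruence. Qed.

Lemma partiso_parthom s t : PartIso M N s t -> In gone s ->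
  PartHom (fun x => In x s) (partiso_map s t).
Proof.
  intros [Hlen Hiso] S1.
  pose proof (fun x => partiso_map_spec s t x Hlen) as Hspec.
  split; [exact S1|]. split; [|split].
  - destruct (Hspec gone S1) as [i [Hs Ht]].
    pose proof (nth_error_lt _ _ _ Hs) as Hi.
    destruct (Hiso i i i Hi Hi Hi) as (_ & Hone & _).
    rewrite Hs, Ht in Hone. assert (Some (partiso_map s t gone) = Some gone) by tauto.
    congruence.
  - intros x y Sx Sy E.
    destruct (Hspec x Sx) as [i [Hsi Hti]], (Hspec y Sy) as [j [Hsj Htj]].
    pose proof (nth_error_lt _ _ _ Hsi) as Hi. pose proof (nth_error_lt _ _ _ Hsj) as Hj.
    destruct (Hiso i j i Hi Hj Hi) as (Heq & _).
    rewrite Hsi, Hti, Hsj, Htj, E in Heq. assert (Some x = Some y) by tauto. congruence.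
  - intros x y Sx Sy Sxy.
    destruct (Hspec x Sx) as [i [Hsi Hti]], (Hspec y Sy) as [j [Hsj Htj]],
      (Hspec _ Sxy) as [k [Hsk Htk]].
    destruct (Hiso i j k (nth_error_lt _ _ _ Hsi) (nth_error_lt _ _ _ Hsj)
                (nth_error_lt _ _ _ Hsk)) as (_ & _ & _ & Hmul).
    rewrite Hsi, Hti, Hsj, Htj, Hsk, Htk in Hmul.
    assert (Some (gmul (partiso_map s t x) (partiso_map s t y))
            = Some (partiso_map s t (gmul x y))) by tauto.
    congruence.
Qed.

Lemma finembeds_parthom : FinEmbeds M N ->
  forall s : list M, In gone s -> exists f, PartHom (fun x => In x s) f.
Proof.
  intros Hemb s S1. destruct (Hemb s) as [t Hst].
  exists (partiso_map s t). exact (partiso_parthom s t Hst S1).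
Qed.

End PartialHom.

Section Transport.
Variables A B A' B' : Group.
Variable fA : A -> A'.
Variable fB : B -> B'.
Variable SA : A -> Prop.
Variable SB : B -> Prop.
Hypothesis HfA : PartHom A A' SA fA.
Hypothesis HfB : PartHom B B' SB fB.

Definition map_letter (l : letter A B) : letter A' B' :=
  match l with inl a => inl (fA a) | inr b => inr (fB b) end.

Definition map_word (w : list (letter A B)) : list (letter A' B') := map map_letter w.

Definition in_S (l : letter A B) : Prop :=
  match l with inl a => SA a | inr b => SB b end.

Definition all_S (w : list (letter A B)) : Prop := forall l, In l w -> in_S l.

Lemma in_S_one l : is_one A B l -> in_S l.
Proof. destruct l; simpl; intros ->; [apply HfA | apply HfB]. Qed.

Lemma map_letter_one_iff l : in_S l -> (is_one A' B' (map_letter l) <-> is_one A B l).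
Proof.
  destruct l; simpl; [apply (parthom_one_iff _ _ SA fA HfA) | apply (parthom_one_iff _ _ SB fB HfB)].
Qed.

Lemma map_ucons l w : in_S l ->
  map_word (ucons A B l w) = ucons A' B' (map_letter l) (map_word w).
Proof.
  intro Sl. pose proof (map_letter_one_iff l Sl) as Hone. unfold ucons.
  destruct (excluded_middle_informative (is_one A B l)),
    (excluded_middle_informative (is_one A' B' (map_letter l))); tauto || reflexivity.
Qed.

Lemma in_S_ucons l w : all_S (ucons A B l w) -> in_S l.
Proof.
  unfold ucons. destruct (excluded_middle_informative (is_one A B l)) as [E|_].
  - intros _. exact (in_S_one l E).
  - intro H. apply H. left. reflexivity.
Qed.

Lemma act_transport l w : in_S l -> all_S w -> all_S (act A B l w) ->
  act A' B' (map_letter l) (map_word w) = map_word (act A B l w).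
Proof.
  intros Sl Sw Sact.
  destruct l as [a|b], w as [|[a'|b'] w']; simpl in *; rewrite ?map_ucons; cbn [map_letter];
    try (apply in_S_ucons with w'; exact Sact); try assumption; try reflexivity.
  - rewrite (proj2 (proj2 (proj2 HfA))); [reflexivity | assumption | |].
    + apply (Sw (inl a')). left. reflexivity.
    + exact (in_S_ucons _ _ Sact).
  - rewrite (proj2 (proj2 (proj2 HfB))); [reflexivity | assumption | |].
    + apply (Sw (inr b')). left. reflexivity.
    + exact (in_S_ucons _ _ Sact).
Qed.

Lemma all_S_trace_red u : all_S (trace A B u) -> all_S (red A B u).
Proof.
  destruct u as [|l u]; intros H x Hx; [destruct Hx|].
  apply H. right. apply in_or_app. left. exact Hx.
Qed.

Lemma red_transport u : all_S (trace A B u) -> red A' B' (map_word u) = map_word (red A B u).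
Proof.
  induction u as [|l u IH]; intro H; [reflexivity|].
  assert (Hu : all_S (trace A B u)) by (intros x Hx; apply H; right; apply in_or_app; auto).
  change (act A' B' (map_letter l) (red A' B' (map_word u)) = map_word (red A B (l :: u))).
  rewrite IH by exact Hu. apply act_transport.
  - apply H. left. reflexivity.
  - exact (all_S_trace_red u Hu).
  - exact (all_S_trace_red (l :: u) H).
Qed.

Lemma map_word_inj u v : all_S u -> all_S v -> map_word u = map_word v -> u = v.
Proof.
  revert v; induction u as [|l u IH]; intros [|l' v] Su Sv E; try discriminate; [reflexivity|].
  injection E as El Ew. f_equal.
  - destruct l as [a|b], l' as [a'|b']; try discriminate; injection El as El; f_equal.
    + apply HfA; [apply (Su (inl a)) | apply (Sv (inl a')) | ]; simpl; auto.
    + apply HfB; [apply (Su (inr b)) | apply (Sv (inr b')) | ]; simpl; auto.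
  - apply IH; [intros x Hx; apply Su | intros x Hx; apply Sv | ]; simpl; auto.
Qed.

Lemma red_eq_transport u v : all_S (trace A B u) -> all_S (trace A B v) ->
  (red A B u = red A B v <-> red A' B' (map_word u) = red A' B' (map_word v)).
Proof.
  intros Su Sv. rewrite !red_transport by assumption. split; intro E.
  - rewrite E. reflexivity.
  - apply map_word_inj; auto using all_S_trace_red.
Qed.

Lemma map_inv_word w : (forall l, In l w -> in_S l /\ in_S (inv_letter A B l)) ->
  map_word (inv_word A B w) = inv_word A' B' (map_word w).
Proof.
  intro Hw. unfold inv_word, map_word. rewrite map_rev, !map_map. f_equal.
  apply map_ext_in. intros [a|b] Hl; destruct (Hw _ Hl) as [S1 S2]; simpl in *.
  - f_equal. exact (parthom_inv _ _ SA fA HfA a S1 S2).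
  - f_equal. exact (parthom_inv _ _ SB fB HfB b S1 S2).
Qed.

End Transport.

Fixpoint atoms (f : qf) : list (term * term) :=
  match f with
  | QEq a b => [(a, b)]
  | QNot g => atoms g
  | QAnd g h | QOr g h => atoms g ++ atoms h
  end.

Fixpoint term_vars (t : term) : list nat :=
  match t with
  | TVar n => [n]
  | TOne => []
  | TMul a b => term_vars a ++ term_vars b
  | TInv a => term_vars a
  end.

Definition qf_vars (f : qf) : list nat :=
  flat_map (fun p => term_vars (fst p) ++ term_vars (snd p)) (atoms f).

Lemma sat_qf_atoms (G H : Group) (e1 : nat -> G) (e2 : nat -> H) f :
  (forall t t', In (t, t') (atoms f) ->
     (eval_term G e1 t = eval_term G e1 t' <-> eval_term H e2 t = eval_term H e2 t')) ->
  (sat_qf G e1 f <-> sat_qf H e2 f).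
Proof.
  induction f; simpl; intro Hat.
  - apply Hat. left. reflexivity.
  - rewrite IHf by exact Hat. reflexivity.
  - rewrite IHf1, IHf2 by (intros; apply Hat, in_or_app; auto). reflexivity.
  - rewrite IHf1, IHf2 by (intros; apply Hat, in_or_app; auto). reflexivity.
Qed.

Fixpoint word_of_term (A B : Group) (W : nat -> list (letter A B)) (t : term)
  : list (letter A B) :=
  match t with
  | TVar n => W n
  | TOne => []
  | TMul a b => word_of_term A B W a ++ word_of_term A B W b
  | TInv a => inv_word A B (word_of_term A B W a)
  end.

Lemma eval_word_of_term (A B P : Group) (iA : A -> P) (iB : B -> P)
  (HiA : is_hom A P iA) (HiB : is_hom B P iB) (e : nat -> P) W :
  (forall n, eval_word A B P iA iB (W n) = e n) ->
  forall t, eval_term P e t = eval_word A B P iA iB (word_of_term A B W t).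
Proof.
  intros HW t. induction t; simpl.
  - symmetry. apply HW.
  - reflexivity.
  - rewrite eval_word_app, IHt1, IHt2. reflexivity.
  - rewrite eval_inv_word, IHt by assumption. reflexivity.
Qed.

Lemma word_of_term_letters (A B : Group) (Good : letter A B -> Prop) W t :
  (forall l, Good l -> Good (inv_letter A B l)) ->
  (forall n, In n (term_vars t) -> forall l, In l (W n) -> Good l) ->
  forall l, In l (word_of_term A B W t) -> Good l.
Proof.
  intros Hinv. induction t; simpl; intros HW l Hl.
  - exact (HW n (or_introl eq_refl) l Hl).
  - destruct Hl.
  - apply in_app_or in Hl as [Hl|Hl]; [apply IHt1 | apply IHt2]; try exact Hl;
      intros n Hn; apply HW, in_or_app; auto.
  - unfold inv_word in Hl. apply in_rev, in_map_iff in Hl as [l' [<- Hl']].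
    apply Hinv, IHt; assumption.
Qed.

Lemma inv_letter_involutive (A B : Group) (l : letter A B) :
  inv_letter A B (inv_letter A B l) = l.
Proof. destruct l; simpl; rewrite inv_inv; reflexivity. Qed.

Lemma map_word_of_term (A B A' B' : Group) fA fB SA SB
  (HfA : PartHom A A' SA fA) (HfB : PartHom B B' SB fB) W t :
  (forall n, In n (term_vars t) -> forall l, In l (W n) ->
     in_S A B SA SB l /\ in_S A B SA SB (inv_letter A B l)) ->
  map_word A B A' B' fA fB (word_of_term A B W t)
  = word_of_term A' B' (fun n => map_word A B A' B' fA fB (W n)) t.
Proof.
  induction t; simpl; intro HW.
  - reflexivity.
  - reflexivity.
  - unfold map_word in *. rewrite map_app, IHt1, IHt2; [reflexivity | |];
      intros n Hn; apply HW, in_or_app; auto.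
  - rewrite (map_inv_word A B A' B' fA fB SA SB HfA HfB).
    + rewrite IHt by exact HW. reflexivity.
    + apply (word_of_term_letters A B _ W t); [|exact HW].
      intros l [S1 S2]. rewrite inv_letter_involutive. split; assumption.
Qed.

Lemma letters_parthom (A B A' B' : Group) :
  FinEmbeds A A' -> FinEmbeds B B' -> forall Ls : list (letter A B),
  exists fA fB SA SB, PartHom A A' SA fA /\ PartHom B B' SB fB /\
    forall l, In l Ls -> in_S A B SA SB l /\ in_S A B SA SB (inv_letter A B l).
Proof.
  intros HA HB Ls.
  pose (La := gone :: flat_map (fun l => match l with inl a => [a; ginv a] | inr _ => [] end) Ls).
  pose (Lb := gone :: flat_map (fun l => match l with inl _ => [] | inr b => [b; ginv b] end) Ls).
  destruct (finembeds_parthom A A' HA La (or_introl eq_refl)) as [fA HfA].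
  destruct (finembeds_parthom B B' HB Lb (or_introl eq_refl)) as [fB HfB].
  exists fA, fB, (fun a => In a La), (fun b => In b Lb).
  split; [exact HfA|]. split; [exact HfB|].
  intros [a|b] Hl; simpl; split; right; apply in_flat_map;
    [exists (inl a) | exists (inl a) | exists (inr b) | exists (inr b)]; simpl; auto.
Qed.

(** One direction of the theorem: a witness of an existential sentence in
    [A1 * B1] is written with words; transporting their letters along partial
    homomorphisms defined on all letters the reductions involve gives a
    witness in [A2 * B2], because equality of values is equality of reduced
    forms on both sides. *)
Lemma existential_transfer (A1 B1 A2 B2 P1 P2 : Group)
  (iA1 : A1 -> P1) (iB1 : B1 -> P1) (iA2 : A2 -> P2) (iB2 : B2 -> P2)
  (HP1 : IsFreeProduct A1 B1 P1 iA1 iB1) (HP2 : IsFreeProduct A2 B2 P2 iA2 iB2)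
  (HA : FinEmbeds A1 A2) (HB : FinEmbeds B1 B2) (f : qf) :
  sat_ex P1 f -> sat_ex P2 f.
Proof.
  intros [e He].
  destruct (choice (fun n u => eval_word A1 B1 P1 iA1 iB1 u = e n)
              (fun n => eval_word_surj A1 B1 P1 iA1 iB1 HP1 (e n))) as [W HW].
  pose (word := word_of_term A1 B1 W).
  pose (Ls := flat_map W (qf_vars f)
              ++ flat_map (fun p => trace A1 B1 (word (fst p)) ++ trace A1 B1 (word (snd p)))
                   (atoms f)).
  destruct (letters_parthom A1 B1 A2 B2 HA HB Ls) as (fA & fB & SA & SB & HfA & HfB & HLs).
  pose (W2 := fun n => map_word A1 B1 A2 B2 fA fB (W n)).
  exists (fun n => eval_word A2 B2 P2 iA2 iB2 (W2 n)).
  refine (proj1 (sat_qf_atoms P1 P2 e _ f _) He). intros t t' Hat.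
  assert (Htrace : forall s, s = t \/ s = t' -> all_S A1 B1 SA SB (trace A1 B1 (word s))).
  { intros s Hs l Hl. apply HLs, in_or_app. right. apply in_flat_map.
    exists (t, t'). split; [exact Hat|]. apply in_or_app. destruct Hs as [-> | ->]; auto. }
  assert (Hvars : forall s, s = t \/ s = t' -> forall n, In n (term_vars s) ->
            forall l, In l (W n) -> in_S A1 B1 SA SB l /\ in_S A1 B1 SA SB (inv_letter A1 B1 l)).
  { intros s Hs n Hn l Hl. apply HLs, in_or_app. left. apply in_flat_map.
    exists n. split; [|exact Hl]. apply in_flat_map.
    exists (t, t'). split; [exact Hat|]. apply in_or_app. destruct Hs as [-> | ->]; auto. }
  rewrite !(eval_word_of_term A1 B1 P1 iA1 iB1 (proj1 HP1) (proj1 (proj2 HP1)) e W HW).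
  rewrite !(eval_word_of_term A2 B2 P2 iA2 iB2 (proj1 HP2) (proj1 (proj2 HP2)) _ W2
              (fun n => eq_refl)).
  unfold W2. rewrite <- !(map_word_of_term A1 B1 A2 B2 fA fB SA SB HfA HfB)
    by (apply Hvars; auto).
  rewrite !eval_word_eq_iff by assumption.
  apply (red_eq_transport A1 B1 A2 B2 fA fB SA SB HfA HfB); auto.
Qed.

(** Theorem 6: free products of groups with finitely equivalent factors are
    existentially equivalent. *)
Theorem mainTheorem6 (A1 B1 A2 B2 P1 P2 : Group)
  (iA1 : A1 -> P1) (iB1 : B1 -> P1) (iA2 : A2 -> P2) (iB2 : B2 -> P2)
  (HP1 : IsFreeProduct A1 B1 P1 iA1 iB1)
  (HP2 : IsFreeProduct A2 B2 P2 iA2 iB2)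
  (Hcap1 : forall a b, iA1 a = iB1 b -> iA1 a = gone)
  (Hcap2 : forall a b, iA2 a = iB2 b -> iA2 a = gone)
  (HA : FEquiv A1 A2) (HB : FEquiv B1 B2) :
  ExEquiv P1 P2.
Proof.
  intro f. split.
  - exact (existential_transfer A1 B1 A2 B2 P1 P2 iA1 iB1 iA2 iB2 HP1 HP2
             (proj1 HA) (proj1 HB) f).
  - exact (existential_transfer A2 B2 A1 B1 P2 P1 iA2 iB2 iA1 iB1 HP2 HP1
             (proj2 HA) (proj2 HB) f).
Qed.
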